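(* Let $(A,\mathit{Con},\mid\!\sim)$ be an abstract nonmonotonic system and $(B,\mathit{Con}^*,\Delta)$ the normal default structure constructed from it as described in the context. For every $P\in\mathit{Con}$, every extension of $P$ in $(B,\mathit{Con}^*,\Delta)$ is of the form $\widetilde{Q}\cup\{[Q]\}$ for some $Q\in\mathit{Con}$ with $Q\subseteq P\subseteq\widetilde{Q}$.
   Context: An abstract nonmonotonic system is a triple $(A,\mathit{Con},\mid\!\sim)$ where $\mathit{Con}$ is a collection of finite subsets of $A$ and $\mid\!\sim\ \subseteq\mathit{Con}\times\mathit{Con}$, satisfying: (1) $X\subseteq Y\in\mathit{Con}\Rightarrow X\in\mathit{Con}$; (2) $a\in A\Rightarrow\{a\}\in\mathit{Con}$; (3) $X\mid\!\sim T\Rightarrow X\cup T\in\mathit{Con}$; (4) $Y\subseteq X\Rightarrow X\mid\!\sim Y$; (5) $X\mid\!\sim T$ and $T\cup X\mid\!\sim Y$ imply $X\mid\!\sim Y$; (6) $X\mid\!\sim Y$ and $X\mid\!\sim Z$ imply $X\mid\!\sim Y\cup Z$. Write $X\mid\!\sim a$ for $X\mid\!\sim\{a\}$, and $\widetilde{X}:=\{t\mid X\mid\!\sim\{t\}\}$. Construction: $B:=A\cup\{[X]\mid X\in\mathit{Con}\}$, where $[X]$ are new pairwise distinct tokens. $\Delta:=\{\frac{X:[X]}{[X]}\mid X\in\mathit{Con}\}\cup\{\frac{\{[X]\}:a}{a}\mid X\mid\!\sim a,\ a\notin X\}$. For finite $W\subseteq B$, $W\in\mathit{Con}^*$ iff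 (i) $W\cap A\in\mathit{Con}$; (ii) $W$ contains at most one token of the form $[X]$; (iii) if $[X]\in W$ then $X\mid\!\sim W\setminus\{[X]\}$. An arbitrary subset of $B$ is consistent if all its finite subsets are in $\mathit{Con}^*$. Extensions in $(B,\mathit{Con}^*,\Delta)$: for consistent $x\subseteq B$ and $S\subseteq B$, $\phi(x,S,0)=x$, $\phi(x,S,i+1)=\phi(x,S,i)\cup\{a\mid\frac{X:a}{a}\in\Delta,\ X\subseteq\phi(x,S,i),\ \{a\}\cup S\text{ consistent}\}$, $\Phi(x,S)=\bigcup_i\phi(x,S,i)$; $y$ is an extension of $x$ if $\Phi(x,y)=y$. *)

From mathcomp Require Import all_boot.
From mathcomp Require Import boolp classical_sets cardinality.
Set Implicit Arguments. Unset Strict Implicit. Unset Printing Implicit Defensive.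
Local Open Scope classical_set_scope.

Section ANS.
Variable A : Type.

Definition is_ANS (Con : set A -> Prop) (ent : set A -> set A -> Prop) : Prop :=
  (forall X, Con X -> finite_set X) /\
  (forall X Y, ent X Y -> Con X /\ Con Y) /\
  (forall X Y, X `<=` Y -> Con Y -> Con X) /\
  (forall a, Con [set a]) /\
  (forall X T, ent X T -> Con (X `|` T)) /\
  (forall X Y, Con X -> Y `<=` X -> ent X Y) /\
  (forall X T Y, ent X T -> ent (T `|` X) Y -> ent X Y) /\
  (forall X Y Z, ent X Y -> ent X Z -> ent X (Y `|` Z)).

Definition tilde (ent : set A -> set A -> Prop) (X : set A) : set A :=
  [set t | ent X [set t]].

(* B := A ∪ { [X] | X ∈ Con }; the token [X] is  inr (exist _ X HX). *)
Definition Btype (Con : set A -> Prop) : Type := (A + {X : set A | Con X})%type.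

Definition token (Con : set A -> Prop) (X : set A) (HX : Con X) : Btype Con :=
  inr (exist _ X HX).

Section Construction.
Variables (Con : set A -> Prop) (ent : set A -> set A -> Prop).
Local Notation B := (Btype Con).

Definition partA (W : set B) : set A := [set a | W (inl a)].

(* Con^* on finite subsets of B.  In (iii), W \ {[X]} contains no other token
   by (ii), hence is identified with W ∩ A. *)
Definition ConStar (W : set B) : Prop :=
  [/\ finite_set W,
      Con (partA W),
      (forall t1 t2, W (inr t1) -> W (inr t2) -> t1 = t2) &
      (forall X (HX : Con X), W (token HX) -> ent X (partA W))].

Definition consistent (x : set B) : Prop :=
  forall W, finite_set W -> W `<=` x -> ConStar W.

(* Δ : normal defaults  (prerequisite : conclusion / conclusion), encoded as
   pairs (prerequisite, conclusion). *)
Definition Delta (d : set B * B) : Prop :=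
  (exists X (HX : Con X), d = (inl @` X, token HX)) \/
  (exists X (HX : Con X) (a : A),
      ent X [set a] /\ ~ X a /\ d = ([set token HX], inl a)).

Fixpoint phi (x S : set B) (i : nat) : set B :=
  match i with
  | 0 => x
  | i.+1 => phi x S i `|`
      [set c | exists Xp, Delta (Xp, c) /\ Xp `<=` phi x S i /\ consistent (c |` S)]
  end.

Definition Phi (x S : set B) : set B := \bigcup_(i in setT) phi x S i.

Definition extension (x y : set B) : Prop := Phi x y = y.

End Construction.
End ANS.

(* An extension y of P contains a token, since otherwise the default
   P : [P] / [P] would still be applicable to y.  Before the first token
   [Q] enters the iteration only elements of P are present, so [Q] is
   triggered by a default whose prerequisite Q is contained in P.  Any
   consistent set containing [Q] consists of [Q] and elements of Q~, which
   gives P <= Q~; conversely every a in Q~ \ Q is added by the default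
   {[Q]} : a / a, whose justification is consistent because y stays inside
   Q~ u {[Q]}. *)
From mathcomp Require Import all_boot.
From mathcomp Require Import boolp classical_sets cardinality.
Set Implicit Arguments. Unset Strict Implicit. Unset Printing Implicit Defensive.
Local Open Scope classical_set_scope.

Lemma first_stage (p : nat -> Prop) n : ~ p 0 -> p n -> exists m, ~ p m /\ p m.+1.
Proof.
move=> np0; elim: n => [//|n IHn] pSn.
by have [pn | npn] := pselect (p n); [exact: IHn | exists n].
Qed.

Section NonmonotonicSystem.
Variables (A : Type) (Con : set A -> Prop) (ent : set A -> set A -> Prop).
Local Notation B := (Btype Con).

Hypothesis Hsys : is_ANS Con ent.

Lemma Con_subset X Y : X `<=` Y -> Con Y -> Con X.
Proof. by case: Hsys => [_ [_ [+ _]]]; apply. Qed.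

Lemma Con_ent_setU X T : ent X T -> Con (X `|` T).
Proof. by case: Hsys => [_ [_ [_ [_ [+ _]]]]]; apply. Qed.

Lemma ent_subset X Y : Con X -> Y `<=` X -> ent X Y.
Proof. by case: Hsys => [_ [_ [_ [_ [_ [+ _]]]]]]; apply. Qed.

Lemma ent_cut X T Y : ent X T -> ent (T `|` X) Y -> ent X Y.
Proof. by case: Hsys => [_ [_ [_ [_ [_ [_ [+ _]]]]]]]; apply. Qed.

Lemma ent_setU X Y Z : ent X Y -> ent X Z -> ent X (Y `|` Z).
Proof. by case: Hsys => [_ [_ [_ [_ [_ [_ [_ +]]]]]]]; apply. Qed.

Lemma ent_weaken X Y Z : ent X Z -> Y `<=` Z -> ent X Y.
Proof.
move=> entXZ YZ; apply: (ent_cut entXZ); apply: ent_subset => [|y /YZ]; last by left.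
by rewrite setUC; exact: Con_ent_setU.
Qed.

Lemma ent_finite_tilde Q Z : Con Q -> finite_set Z -> Z `<=` tilde ent Q -> ent Q Z.
Proof.
move=> ConQ /(@finite_seqP {classic A}) [s ->].
elim: s => [|a s IHs] sQ; first exact: ent_subset.
have -> : [set` (a :: s)] = [set a] `|` [set` s] :> set A.
  apply/seteqP; split => x /=; rewrite inE; first by case/orP => [/eqP|]; [left|right].
  by case=> [->|sx]; rewrite ?eqxx ?sx ?orbT.
apply: ent_setU; first by apply: sQ; rewrite /= inE eqxx.
by apply: IHs => x sx; apply: sQ; rewrite /= inE sx orbT.
Qed.

Lemma token_inj X Y (HX : Con X) (HY : Con Y) : token HX = token HY -> X = Y.
Proof. by case. Qed.

Lemma consistent_subset (V W : set B) :
  V `<=` W -> consistent ent W -> consistent ent V.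
Proof. by move=> VW consW U finU UV; apply: consW => // z /UV /VW. Qed.

Lemma consistent_token_sub (W : set B) Q (HQ : Con Q) :
  consistent ent W -> W (token HQ) -> W `<=` inl @` tilde ent Q `|` [set token HQ].
Proof.
move=> consW WQ [a Wa | t Wt].
  have sub : [set token HQ; inl a] `<=` W by move=> _ [->|->].
  have [_ _ _ entW] := consW _ (finite_set2 _ _) sub.
  left; exists a => //; apply: ent_weaken (entW Q HQ (or_introl erefl)) _.
  by move=> b ->; right.
have sub : [set inr t; token HQ] `<=` W by move=> _ [->|->].
have [_ _ uniqW _] := consW _ (finite_set2 _ _) sub.
by right; rewrite (uniqW t (exist _ Q HQ)); [|left|right].
Qed.

Lemma consistent_tilde_token Q (HQ : Con Q) (S : set A) :
  S `<=` tilde ent Q -> consistent ent (inl @` S `|` [set token HQ]).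
Proof.
move=> SQ W finW WS.
have finA : finite_set (partA W) by apply: finite_preimage finW => ? ? _ _ [].
have entQW : ent Q (partA W).
  apply: ent_finite_tilde finA _ => // a /WS [[b Sb [<-]]|//].
  exact: SQ.
split=> //.
- by apply: Con_subset (Con_ent_setU entQW) => a Wa; right.
- by move=> t1 t2 /WS [[? _ //]|[->]] /WS [[? _ //]|[->]].
- by move=> X HX /WS [[? _ //]|/token_inj ->].
Qed.

Section Iteration.
Variables (x S : set B).
Local Notation phi := (phi ent x S).

Lemma phi_tokenless_sub i : (forall t, ~ phi i (inr t)) -> phi i `<=` x.
Proof.
elim: i => [_ //|i IHi] noSi z [phi_z | new_z].
  by apply: IHi => // t ti; apply: (noSi t); left.
exfalso; have [Xp [DXp [Xp_i _]]] := new_z.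
case: DXp => [[X [HX [_ zE]]] | [X [HX [a [_ [_ [XpE _]]]]]]].
  by apply: (noSi (exist _ X HX)); right; rewrite -/(token HX) -zE.
by apply: (noSi (exist _ X HX)); left; apply: Xp_i; rewrite XpE.
Qed.

Lemma phi_new_token i X (HX : Con X) :
  (forall t, ~ phi i (inr t)) -> phi i.+1 (token HX) ->
  inl @` X `<=` phi i /\ consistent ent (token HX |` S).
Proof.
move=> noSi [/noSi // | [Xp [DXp [Xp_i consXS]]]]; split=> //.
case: DXp => [[Y [HY [XpE XY]]] | [? [? [? [_ [_ []]]]]]] //.
by rewrite XY -XpE.
Qed.

End Iteration.

Section Extension.
Variables (x y : set B).
Hypothesis ext_y : extension ent x y.

Lemma extension_phi i : phi ent x y i `<=` y.
Proof. by move=> z phi_z; rewrite -ext_y; exists i. Qed.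

Lemma extension_phiP z : y z -> exists i, phi ent x y i z.
Proof. by rewrite -{1}ext_y => -[i _ phi_z]; exists i. Qed.

Lemma extension_default_closed i Xp c :
  Delta ent (Xp, c) -> Xp `<=` phi ent x y i -> consistent ent (c |` y) -> y c.
Proof. by move=> DXp Xp_i consc; apply: (@extension_phi i.+1 c); right; exists Xp. Qed.

End Extension.

Section ExtensionOfConSet.
Variables (P : set A) (HP : Con P) (y : set B).
Hypothesis ext_y : extension ent (inl @` P) y.

Lemma extension_has_token : exists t, y (inr t).
Proof.
have [//|noy] := pselect (exists t, y (inr t)); exfalso.
have yP : y `<=` inl @` P.
  move=> z /(extension_phiP ext_y) [i phi_z].
  apply: (phi_tokenless_sub _ phi_z) => t phi_t; apply: noy; exists t.
  exact: extension_phi phi_t.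
apply: noy; exists (exist _ P HP).
apply: (extension_default_closed ext_y (i := 0) (Xp := inl @` P)) => //.
  by left; exists P, HP.
apply: (consistent_subset _ (consistent_tilde_token (HQ := HP) (S := P) _)).
  by move=> z [->|/yP]; [right|left].
by move=> p Pp; apply: ent_subset => // ? ->.
Qed.

Lemma extension_eq_tilde_token Q (HQ : Con Q) :
  Q `<=` P -> y (token HQ) -> consistent ent y ->
  y = inl @` tilde ent Q `|` [set token HQ].
Proof.
move=> QP yQ consy; have y_sub := consistent_token_sub consy yQ.
apply/seteqP; split=> // _ [[a Qa <-] | ->] //.
have [Q_a | nQ_a] := pselect (Q a).
  by apply: (@extension_phi _ _ ext_y 0); exists a => //; exact: QP.
have [i phiQ] := extension_phiP ext_y yQ.
apply: (extension_default_closed ext_y (i := i) (Xp := [set token HQ])).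
- by right; exists Q, HQ, a.
- by move=> _ ->.
- have consQ := consistent_tilde_token (HQ := HQ) (S := tilde ent Q) (fun _ h => h).
  by apply: (consistent_subset _ consQ) => z [->|/y_sub]; [left; exists a|].
Qed.

End ExtensionOfConSet.

End NonmonotonicSystem.

Theorem lemma4 (A : Type) (Con : set A -> Prop) (ent : set A -> set A -> Prop)
  (Hsys : is_ANS Con ent) (P : set A) (HP : Con P) (y : set (Btype Con)) :
  extension ent (inl @` P) y ->
  exists (Q : set A) (HQ : Con Q),
    Q `<=` P /\ P `<=` tilde ent Q /\
    y = (inl @` tilde ent Q) `|` [set token HQ].
Proof.
move=> ext_y; pose has_token i := exists t, phi ent (inl @` P) y i (inr t).
have [t yt] := extension_has_token Hsys HP ext_y.
have [i phi_t] := extension_phiP ext_y yt.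
have [m [no_m [[Q HQ] phiQ]]] : exists m, ~ has_token m /\ has_token m.+1.
  by apply: (@first_stage _ i) => [[? [? _ //]]|]; exists t.
have tokenless_m u : ~ phi ent (inl @` P) y m (inr u) by move=> phi_u; apply: no_m; exists u.
have [Q_m consQ] := phi_new_token tokenless_m phiQ.
have QP : Q `<=` P.
  by move=> q Qq; have [p Pp [<-]] := phi_tokenless_sub tokenless_m (Q_m _ (imageP _ Qq)).
have yQ := extension_phi ext_y phiQ.
have consy : consistent ent y by apply: (consistent_subset _ consQ) => z; right.
have y_eq := extension_eq_tilde_token Hsys ext_y QP yQ consy.
exists Q, HQ; split=> //; split=> // p Pp.
by move: (extension_phi ext_y (imageP inl Pp : phi ent _ y 0 _)); rewrite y_eq => -[[a ? [<-]]|].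
Qed.
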